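(* Let $p$ be a prime, $k\ge1$, $n=4k$, and let $f:\mathbb{F}_{p^n}\to\mathbb{F}_{p^{2k}}$ be $f(x)=T^n_k(x)+T^n_{2k}(x)$. Then: (1) every $\gamma\in\mathbb{F}_{p^n}^*$ with $\gamma+\gamma^{p^{2k}}=0$ is a $0$-translator of $f$, i.e. $f(x+u\gamma)-f(x)=0$ for all $x\in\mathbb{F}_{p^n}$ and all $u\in\mathbb{F}_{p^{2k}}$; (2) if $p=2$, then every $\gamma\in\mathbb{F}_{2^n}^*$ is a $(k,\gamma^{2^k}+\gamma^{2^{3k}})$-Frobenius translator of $f$, i.e. $f(x+u\gamma)-f(x)=u^{2^k}(\gamma^{2^k}+\gamma^{2^{3k}})$ for all $x\in\mathbb{F}_{2^n}$ and all $u\in\mathbb{F}_{2^{2k}}$.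
   Context: For $m\mid n$, $T^n_m:\mathbb{F}_{p^n}\to\mathbb{F}_{p^m}$ denotes the relative trace $T^n_m(\beta)=\beta+\beta^{p^m}+\dots+\beta^{p^{(n/m-1)m}}$. For a function $f:\mathbb{F}_{p^n}\to\mathbb{F}_{p^{m}}$ with $m\mid n$, $\gamma\in\mathbb{F}_{p^n}^*$, $b\in\mathbb{F}_{p^m}$ and $i\in\{0,\dots,m-1\}$, $\gamma$ is an $(i,b)$-Frobenius translator of $f$ (with respect to $\mathbb{F}_{p^m}$) if $f(x+u\gamma)-f(x)=u^{p^i}b$ for all $x\in\mathbb{F}_{p^n}$ and all $u\in\mathbb{F}_{p^m}$; a $0$-translator is one with $b=0$. *)

(* F_{p^n} is modelled as an arbitrary finite field F with
   #|F| = p^n; the subfield F_{p^m} (m | n) is the set of fixed points of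
   x |-> x^(p^m) inside F. *)
From HB Require Import structures.
From mathcomp Require Import all_boot all_order all_algebra all_field.
Set Implicit Arguments. Unset Strict Implicit. Unset Printing Implicit Defensive.
Import GRing.Theory.
Local Open Scope ring_scope.

Definition in_subfield (F : finFieldType) (p m : nat) (x : F) : bool :=
  x ^+ (p ^ m) == x.

Definition rtrace (F : finFieldType) (p n m : nat) (b : F) : F :=
  \sum_(i < n %/ m) b ^+ (p ^ (i * m)).

Definition frob_translator (F : finFieldType) (p m : nat) (f : F -> F)
    (gamma : F) (i : nat) (b : F) : Prop :=
  [/\ gamma != 0, in_subfield p m b, (i < m)%N &
      forall x u : F, in_subfield p m u ->
        f (x + u * gamma) - f x = u ^+ (p ^ i) * b].

Definition zero_translator (F : finFieldType) (p m : nat) (f : F -> F)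
    (gamma : F) : Prop :=
  gamma != 0 /\
  forall x u : F, in_subfield p m u -> f (x + u * gamma) - f x = 0.

Definition f_prop2 (F : finFieldType) (p k : nat) (x : F) : F :=
  rtrace p (4 * k) k x + rtrace p (4 * k) (2 * k) x.

From HB Require Import structures.
From mathcomp Require Import all_boot all_order all_algebra all_field.
From mathcomp Require Import ring.
Set Implicit Arguments. Unset Strict Implicit. Unset Printing Implicit Defensive.
Import GRing.Theory.
Local Open Scope ring_scope.

(* Expanding the two traces gives
   f(x) = x^(p^k) + x^(p^3k) + 2 (x + x^(p^2k)),
   and f is additive because x |-> x^(p^e) is, so f(x + u g) - f(x) = f(u g).
   If g^(p^2k) = -g and u lies in F_(p^2k), then y = u g satisfies
   y^(p^2k) = -y, hence y^(p^3k) = -y^(p^k), and every term of f(y) cancels.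
   In characteristic 2 the doubled term disappears, and
   u^(2^3k) = u^(2^k) factors out of f(u g) = (u g)^(2^k) + (u g)^(2^3k). *)

Lemma rtrace_mulE (F : finFieldType) (p d m : nat) (x : F) : (0 < m)%N ->
  rtrace p (d * m)%N m x = \sum_(i < d) x ^+ (p ^ (i * m)).
Proof. by move=> m_gt0; rewrite /rtrace mulnK. Qed.

Lemma f_prop2E (F : finFieldType) (p k : nat) (x : F) : (0 < k)%N ->
  f_prop2 p k x =
    x ^+ (p ^ k) + x ^+ (p ^ (3 * k)) + (x + x ^+ (p ^ (2 * k))) *+ 2.
Proof.
move=> k_gt0; rewrite /f_prop2 rtrace_mulE //.
rewrite -[(4 * k)%N]/(2 * 2 * k)%N -mulnA rtrace_mulE ?muln_gt0 //.
by rewrite !big_ord_recr !big_ord0 /= !mul0n !mul1n expn0 expr1 !add0r; ring.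
Qed.

Lemma in_subfield_card (F : finFieldType) (p n : nat) (x : F) :
  #|F| = (p ^ n)%N -> in_subfield p n x.
Proof. by move=> cardF; rewrite /in_subfield -cardF expf_card. Qed.

Lemma in_subfield_exprD (F : finFieldType) (p m e : nat) (u : F) :
  in_subfield p m u -> u ^+ (p ^ (m + e)) = u ^+ (p ^ e).
Proof. by move=> /eqP u_fix; rewrite expnD exprM u_fix. Qed.

Section PrimeCharacteristic.

Variables (F : finFieldType) (p : nat).
Hypothesis pcharFp : p \in [pchar F].

Lemma pnat_pchar_expn e : [pchar F].-nat (p ^ e)%N.
Proof.
by rewrite (eq_pnat _ (pcharf_eq pcharFp)) pnatX pnat_id ?(pcharf_prime pcharFp).
Qed.

Lemma rtraceD n m (x y : F) :
  rtrace p n m (x + y) = rtrace p n m x + rtrace p n m y.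
Proof.
rewrite /rtrace -big_split; apply: eq_bigr => i _.
by rewrite exprDn_pchar ?pnat_pchar_expn.
Qed.

Lemma f_prop2D k (x y : F) : f_prop2 p k (x + y) = f_prop2 p k x + f_prop2 p k y.
Proof. by rewrite /f_prop2 !rtraceD addrACA. Qed.

Lemma f_prop2_diff k (x y : F) : f_prop2 p k (x + y) - f_prop2 p k x = f_prop2 p k y.
Proof. by rewrite f_prop2D addrC addKr. Qed.

Lemma in_subfield_add_frobenius m (x : F) :
  x ^+ (p ^ (2 * m)) = x -> in_subfield p m (x + x ^+ (p ^ m)).
Proof.
move=> x_fix; rewrite /in_subfield exprDn_pchar ?pnat_pchar_expn //.
by rewrite -exprM -expnD addnn -mul2n x_fix addrC.
Qed.

Lemma in_subfield_frobenius_sum k (x : F) : #|F| = (p ^ (4 * k))%N ->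
  in_subfield p (2 * k) (x ^+ (p ^ k) + x ^+ (p ^ (3 * k))).
Proof.
move=> cardF; rewrite -[(3 * k)%N]/(k + 2 * k)%N expnD exprM.
apply: (in_subfield_add_frobenius (m := (2 * k)%N)).
rewrite -exprM -expnD addnC expnD exprM mulnA -[(2 * 2 * k)%N]/(4 * k)%N.
by rewrite (eqP (in_subfield_card x cardF)).
Qed.

Lemma f_prop2_eq0 k (y : F) : (0 < k)%N ->
  y ^+ (p ^ (2 * k)) = - y -> f_prop2 p k y = 0.
Proof.
move=> k_gt0 y_anti; have y3 : y ^+ (p ^ (3 * k)) = - y ^+ (p ^ k).
  by rewrite mulSn addnC expnD exprM y_anti exprNn_pchar ?pnat_pchar_expn.
by rewrite f_prop2E // y3 y_anti !subrr mul0rn addr0.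
Qed.

End PrimeCharacteristic.

Lemma f_prop2_pchar2 (F : finFieldType) k (y : F) :
  2 \in [pchar F] -> (0 < k)%N ->
  f_prop2 2 k y = y ^+ (2 ^ k) + y ^+ (2 ^ (3 * k)).
Proof.
by move=> pchar2 k_gt0; rewrite f_prop2E // mulr2n addrr_pchar2 // addr0.
Qed.

Theorem proposition2 (F : finFieldType) (p k : nat) :
  prime p -> (0 < k)%N -> #|F| = (p ^ (4 * k))%N ->
  (forall gamma : F, gamma != 0 -> gamma + gamma ^+ (p ^ (2 * k)) = 0 ->
     zero_translator p (2 * k) (f_prop2 p k) gamma) /\
  (p = 2%N -> forall gamma : F, gamma != 0 ->
     frob_translator p (2 * k) (f_prop2 p k) gamma k
       (gamma ^+ (2 ^ k) + gamma ^+ (2 ^ (3 * k)))).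
Proof.
move=> p_prime k_gt0 cardF; have pcharFp := card_finPcharP cardF p_prime.
split=> [g g_neq0 g_anti | p2 g g_neq0].
  have g_frob : g ^+ (p ^ (2 * k)) = - g by apply/eqP; rewrite -addr_eq0 addrC g_anti.
  split=> // x u /eqP u_fix; rewrite f_prop2_diff // f_prop2_eq0 //.
  by rewrite exprMn u_fix g_frob mulrN.
subst p; split=> //.
- exact: in_subfield_frobenius_sum.
- by rewrite -[X in (X < _)%N]mul1n ltn_mul2r k_gt0.
move=> x u u_sub; rewrite f_prop2_diff // f_prop2_pchar2 // !exprMn.
have u3 : u ^+ (2 ^ (3 * k)) = u ^+ (2 ^ k).
  by rewrite -[(3 * k)%N]/(k + 2 * k)%N addnC in_subfield_exprD.
by rewrite u3 mulrDr.
Qed.
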